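(* Let $\mathcal G=(V_{\min},V_{\max},E,w,\lambda)$ be an improving discounted payoff game, $\sigma$ a joint strategy, and $\nu$ a basis valuation of $H$ minimising $f_\sigma$ over all solutions of $H$, with $f_\sigma(\nu)\neq0$. Assume there are no local improvements of $\sigma$ for $\nu$, i.e. $\mathsf{offset}(\nu,(v,v'))\ge\mathsf{offset}(\nu,(v,\sigma(v)))$ for all $(v,v')\in E$. Let $E'$ be a given set of edges with $E_\nu\subseteq E'\subseteq S^\sigma_\nu$ containing an outgoing edge of every vertex. Then there exist a neighbouring valuation $\nu''$ of $\nu$ and a joint strategy $\sigma'$ with $f_{\sigma'}(\nu'')<f_\sigma(\nu)$; such a $\sigma'$ is better than $\sigma$, and it can be chosen such that $(v,\sigma'(v))\in E'$ for all $v\in V$.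
   Context: A discounted payoff game is a tuple $\mathcal G=(V_{\min},V_{\max},E,w,\lambda)$ with $V=V_{\min}\cup V_{\max}$ finite (disjoint union of Min and Max vertices), $E\subseteq V\times V$ with every vertex having an outgoing edge, $w:E\to\mathbb R$, $\lambda:E\to[0,1)$. A joint strategy is a map $\sigma:V\to V$ with $(v,\sigma(v))\in E$ for all $v$. $H$ is the system of inequations over $x\in\mathbb R^V$ containing, for each edge $e=(v,v')$, $I_e$: $x(v)\ge w_e+\lambda_e x(v')$ if $v\in V_{\max}$ and $x(v)\le w_e+\lambda_e x(v')$ if $v\in V_{\min}$. A basis of $H$ is a set of $|V|$ inequations of $H$ whose equality versions have a unique common solution; if that solution satisfies $H$ it is the basis valuation of that basis. $\mathsf{offset}(x,(v,v'))=x(v)-(w_{(v,v')}+\lambda_{(v,v')}x(v'))$ if $v\in V_{\max}$, and $(w_{(v,v')}+\lambda_{(v,v')}x(v'))-x(v)$ otherwise; $f_\sigma(x)=\sum_{v\in V}\mathsf{offset}(x,(v,\sigma(v)))$. $S^\sigma_\nu=\{(v,v')\in E\mid \mathsf{offset}(\nu,(v,v'))=\mathsf{offset}(\nu,(v,\sigma(v)))\}$ and $E_\nu=\{(v,v')\in E\mid\mathsf{offset}(\nu,(v,v'))=0\}$. A joint strategy $\sigma'$ is better than $\sigma$ iff $\min\{f_{\sigma'}(x)\mid x\text{ solves }H\}<\min\{f_{\sigma}(x)\mid x\text{ solves }H\}$. The game is sharp if every basis valuation satisfies exactly $|V|$ inequations of $H$ with equality (so it is the valuation of a unique basis). A sharp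 game is improving if for every joint strategy $\sigma$ and every basis valuation $\nu$ that does not minimise $f_\sigma$ over the solutions of $H$, there is a basis obtained from the basis of $\nu$ by exchanging exactly one inequation whose basis valuation $\nu'$ satisfies $f_\sigma(\nu')<f_\sigma(\nu)$. A neighbouring valuation of $\nu$ is a basis valuation of a basis obtained from the basis of $\nu$ by exchanging exactly one inequation. *)

From HB Require Import structures.
From mathcomp Require Import all_boot all_order all_algebra.
From mathcomp Require Import reals.
Set Implicit Arguments. Unset Strict Implicit. Unset Printing Implicit Defensive.
Import Order.TTheory GRing.Theory Num.Theory.
Local Open Scope ring_scope.

(* Max vertices are those with isMax v = true, Min vertices the others
   (so V = V_min ⊎ V_max).  Edges are pairs (v,v'); the weight and discount
   are given as functions on V*V, only their values on edges matter. *)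
Record game (R : realType) (V : finType) := Game {
  isMax : pred V;
  E : {set V * V};
  w : V * V -> R;
  lam : V * V -> R
}.

Section Defs.
Variables (R : realType) (V : finType) (G : game R V).

Definition valid_game : Prop :=
  (forall v : V, exists v' : V, (v, v') \in E G) /\
  (forall e, e \in E G -> 0 <= lam G e /\ lam G e < 1).

Definition ineq_holds (x : V -> R) (e : V * V) : Prop :=
  if isMax G e.1 then x e.1 >= w G e + lam G e * x e.2
  else x e.1 <= w G e + lam G e * x e.2.

Definition eq_holds (x : V -> R) (e : V * V) : bool :=
  x e.1 == w G e + lam G e * x e.2.

Definition solves_H (x : V -> R) : Prop :=
  forall e, e \in E G -> ineq_holds x e.

Definition is_basis (B : {set V * V}) : Prop :=
  B \subset E G /\ #|B| = #|V| /\
  exists x : V -> R, (forall e, e \in B -> eq_holds x e) /\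
    (forall y : V -> R, (forall e, e \in B -> eq_holds y e) -> forall v, y v = x v).

Definition basis_val_of (B : {set V * V}) (nu : V -> R) : Prop :=
  is_basis B /\ (forall e, e \in B -> eq_holds nu e) /\ solves_H nu.

Definition basis_val (nu : V -> R) : Prop := exists B, basis_val_of B nu.

Definition joint_strategy (s : V -> V) : Prop := forall v, (v, s v) \in E G.

Definition offset (x : V -> R) (e : V * V) : R :=
  if isMax G e.1 then x e.1 - (w G e + lam G e * x e.2)
  else (w G e + lam G e * x e.2) - x e.1.

Definition f_strat (s : V -> V) (x : V -> R) : R :=
  \sum_(v : V) offset x (v, s v).

Definition S_set (s : V -> V) (nu : V -> R) : {set V * V} :=
  [set e in E G | offset nu e == offset nu (e.1, s e.1)].
Definition E_tight (nu : V -> R) : {set V * V} :=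
  [set e in E G | offset nu e == 0].

Definition minimises (s : V -> V) (nu : V -> R) : Prop :=
  solves_H nu /\ forall x, solves_H x -> f_strat s nu <= f_strat s x.

Definition is_min_value (s : V -> V) (m : R) : Prop :=
  (exists x, solves_H x /\ f_strat s x = m) /\
  forall x, solves_H x -> m <= f_strat s x.

Definition better (s' s : V -> V) : Prop :=
  exists m' m, is_min_value s' m' /\ is_min_value s m /\ m' < m.

Definition sharp : Prop :=
  forall nu, basis_val nu -> #|[set e in E G | eq_holds nu e]| = #|V|.

Definition neighbouring (nu nu' : V -> R) : Prop :=
  exists B e e', [/\ basis_val_of B nu, e \in B, e' \in E G, e' \notin B &
                     basis_val_of (e' |: (B :\ e)) nu'].

Definition improving : Prop :=
  sharp /\
  forall s nu, joint_strategy s -> basis_val nu -> ~ minimises s nu ->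
    exists nu', neighbouring nu nu' /\ f_strat s nu' < f_strat s nu.

End Defs.

(** Restricted to the tight edges [E_nu] of the optimal valuation [nu], the
    game becomes a discounted game in which every vertex without a tight
    edge has the fixed value -1 (Max) or 1 (Min).  A fixpoint [d] of its
    Bellman operator is a direction along which [nu] can be moved a little
    while staying a solution of [H]: on tight edges the offset does not
    decrease, and the other edges have slack.  The strategy [s'] that follows
    an optimal tight edge where one exists, and an arbitrary edge of [E']
    otherwise, has the same offsets as [s] at [nu], but its offsets decrease
    along [d], strictly at the vertices without tight edges; such a vertex
    exists because [f_s(nu) <> 0].  Hence [nu] does not minimise [f_s'], and
    improvement yields a neighbour [nu''] with
    [f_s'(nu'') < f_s'(nu) = f_s(nu) = min f_s], so [s'] is better than [s]. *)

From HB Require Import structures.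
From mathcomp Require Import boolp classical_sets.
From mathcomp Require Import all_boot all_order all_algebra.
From mathcomp Require Import reals ring lra.
Import Order.TTheory GRing.Theory Num.Theory.
Set Implicit Arguments. Unset Strict Implicit. Unset Printing Implicit Defensive.
Local Open Scope ring_scope.

Section MonotoneFixpoint.
Local Open Scope classical_set_scope.
Variables (R : realType) (V : Type) (a b : R).

Definition in_box (x : V -> R) : Prop := forall v, a <= x v <= b.

Variable F : (V -> R) -> V -> R.
Hypothesis a_le_b : a <= b.
Hypothesis F_mono : forall x y, (forall v, x v <= y v) -> forall v, F x v <= F y v.
Hypothesis F_box : forall x, in_box x -> in_box (F x).

(* Knaster-Tarski: the pointwise supremum of the post-fixpoints is a fixpoint. *)
Lemma monotone_box_fixpoint : exists2 d, in_box d & F d = d.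
Proof.
pose post x := in_box x /\ forall v, x v <= F x v.
pose d v := sup [set x v | x in post].
have post_a : post (fun=> a).
  have box_a : in_box (fun=> a) by move=> v; rewrite lexx.
  by split=> // v; case/andP: (F_box box_a v).
have nonempty v : [set x v | x in post] !=set0 by exists a, (fun=> a).
have bounded v : ubound [set x v | x in post] b.
  by move=> _ [x [box_x _] <-]; case/andP: (box_x v).
have le_d x : post x -> forall v, x v <= d v.
  move=> post_x v; apply: ub_le_sup; last by exists x.
  by exists b; exact: bounded.
have box_d : in_box d.
  by move=> v; rewrite (le_d _ post_a) ge_sup.
have d_le_Fd v : d v <= F d v.
  apply: ge_sup => // _ [x post_x <-].
  exact: le_trans (post_x.2 v) (F_mono (le_d x post_x) v).
have post_Fd : post (F d) by split; [exact: F_box | exact: F_mono].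
exists d => //; apply: funext => v; apply/eqP.
by rewrite eq_le d_le_Fd le_d.
Qed.

End MonotoneFixpoint.

Section Game.
Variables (R : realType) (V : finType) (G : game R V).

Lemma ineq_holds_offset x e : ineq_holds G x e <-> 0 <= offset G x e.
Proof. by rewrite /ineq_holds /offset; case: (isMax G e.1); rewrite subr_ge0. Qed.

(* The derivative of [offset G (nu + t d) e] with respect to [t]. *)
Definition slope (d : V -> R) (e : V * V) : R :=
  if isMax G e.1 then d e.1 - lam G e * d e.2 else lam G e * d e.2 - d e.1.

Lemma offset_translate nu d t e :
  offset G (fun v => nu v + t * d v) e = offset G nu e + t * slope d e.
Proof. by rewrite /offset /slope; case: (isMax G e.1); ring. Qed.

Lemma f_strat_translate s nu d t :
  f_strat G s (fun v => nu v + t * d v) =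
  f_strat G s nu + t * \sum_v slope d (v, s v).
Proof.
rewrite /f_strat mulr_sumr -big_split.
by apply: eq_bigr => v _; rewrite offset_translate.
Qed.

Lemma basis_val_of_uniq B mu1 mu2 :
  basis_val_of G B mu1 -> basis_val_of G B mu2 -> mu1 = mu2.
Proof.
move=> [[_ [_ [x [_ x_uniq]]]] [eq1 _]] [_ [eq2 _]].
by apply: funext => v; rewrite (x_uniq _ eq1) (x_uniq _ eq2).
Qed.

(* Improvement steps strictly decrease [f_s] and there are finitely many
   bases, so a basis with the least value of [f_s] is a minimiser. *)
Lemma improving_minimiser_exists s nu :
  improving G -> joint_strategy G s -> basis_val G nu ->
  exists mu, minimises G s mu.
Proof.
move=> [_ improve] js [B0 B0_nu].
have [val val_spec] : {val : {set V * V} -> V -> R &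
    forall B, (exists mu, basis_val_of G B mu) -> basis_val_of G B (val B)}.
  apply: (choice (P := fun B mu =>
    (exists m, basis_val_of G B m) -> basis_val_of G B mu)) => B.
  case: (pselect (exists m, basis_val_of G B m)) => [[m Bm]|no_val].
    by exists m.
  by exists (fun=> 0) => /no_val.
pose has_val B := `[< exists mu, basis_val_of G B mu >].
have B0_basis : has_val B0 by apply/asboolP; exists nu.
case: (arg_minP (fun B => f_strat G s (val B)) B0_basis) => B /asboolP B_basis B_min.
have B_val := val_spec B B_basis.
case: (pselect (minimises G s (val B))) => [min_val|not_min]; first by exists (val B).
have [mu' [[B1 [e [e' [B1_val _ _ _ B'_val]]]] lt_mu']] :=
  improve s _ js (ex_intro _ B B_val) not_min.
have B'_basis : has_val (e' |: (B1 :\ e)) by apply/asboolP; exists mu'.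
have := B_min _ B'_basis.
rewrite (basis_val_of_uniq (val_spec _ (ex_intro _ mu' B'_val)) B'_val).
by rewrite leNgt lt_mu'.
Qed.

Lemma minimises_is_min_value s mu :
  minimises G s mu -> is_min_value G s (f_strat G s mu).
Proof. by move=> [mu_sol mu_min]; split=> //; exists mu. Qed.

Lemma loose_vertex_exists s nu :
  solves_H G nu -> joint_strategy G s ->
  (forall e, e \in E G -> offset G nu (e.1, s e.1) <= offset G nu e) ->
  f_strat G s nu != 0 -> exists u, forall t, (u, t) \notin E_tight G nu.
Proof.
move=> nu_sol js no_local; apply: contra_neqP => no_loose.
apply: big1 => v _.
have [t] : exists t, (v, t) \in E_tight G nu.
  apply: contrapT => no_tight; apply: no_loose; exists v => t.
  by apply/negP => vt; apply: no_tight; exists t.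
rewrite inE => /andP[vt_E /eqP vt_tight]; apply/eqP.
rewrite eq_le -{1}vt_tight (no_local (v, t) vt_E) /=.
exact/ineq_holds_offset/nu_sol/js.
Qed.

Hypothesis lam_bounds : forall e, e \in E G -> 0 <= lam G e /\ lam G e < 1.

(* The loose edges have slack at least [delta], and slopes of directions in
   the unit box are at least [-2]. *)
Lemma translate_solves_H nu d :
  solves_H G nu -> in_box (-1) 1 d ->
  {in E_tight G nu, forall e, 0 <= slope d e} ->
  exists2 t, 0 < t & solves_H G (fun v => nu v + t * d v).
Proof.
move=> nu_sol box_d tight_slope.
have off_ge0 e : e \in E G -> 0 <= offset G nu e.
  by move=> eE; exact/ineq_holds_offset/nu_sol.
pose loose e := (e \in E G) && (offset G nu e != 0).
pose delta := \big[Order.min/1]_(e | loose e) offset G nu e.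
have delta_gt0 : 0 < delta.
  apply/bigmin_gtP; split => // e /andP[eE off_neq0].
  by rewrite lt_neqAle eq_sym off_neq0 off_ge0.
exists (delta / 2); first by lra.
move=> [v t] vt_E; apply/ineq_holds_offset; rewrite offset_translate.
have [/eqP off0|off_neq0] := boolP (offset G nu (v, t) == 0).
  rewrite off0 add0r mulr_ge0 ?tight_slope //; first by lra.
  by rewrite inE vt_E off0 eqxx.
have off_ge_delta : delta <= offset G nu (v, t).
  by apply: bigmin_le_cond; rewrite /loose vt_E.
have [lam_ge0 lam_lt1] := lam_bounds vt_E.
have slope_ge : -2 <= slope d (v, t).
  have := box_d v; have := box_d t; rewrite /slope /=.
  by case: (isMax G v) => /andP[? ?] /andP[? ?]; nra.
nra.
Qed.

Lemma descent_not_minimises s nu d :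
  solves_H G nu -> in_box (-1) 1 d ->
  {in E_tight G nu, forall e, 0 <= slope d e} ->
  \sum_v slope d (v, s v) < 0 -> ~ minimises G s nu.
Proof.
move=> nu_sol box_d tight_slope sum_lt0 [_ nu_min].
have [t t_gt0 x_sol] := translate_solves_H nu_sol box_d tight_slope.
have := nu_min _ x_sol; rewrite f_strat_translate.
by rewrite lerDl leNgt pmulr_rlt0 // sum_lt0.
Qed.

Section Bellman.
Variable T : {set V * V}.
Hypothesis T_sub : T \subset E G.

Definition bellman (x : V -> R) (v : V) : R :=
  if isMax G v then \big[Order.max/-1]_(t | (v, t) \in T) (lam G (v, t) * x t)
  else \big[Order.min/1]_(t | (v, t) \in T) (lam G (v, t) * x t).

Lemma lam_bounds_T e : e \in T -> 0 <= lam G e /\ lam G e < 1.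
Proof. by move=> /(subsetP T_sub); exact: lam_bounds. Qed.

Lemma bellman_mono x y :
  (forall v, x v <= y v) -> forall v, bellman x v <= bellman y v.
Proof.
move=> le_xy v; rewrite /bellman; case: (isMax G v).
- by apply: le_bigmax2 => t /lam_bounds_T[lam_ge0 _]; exact: ler_wpM2l.
- by apply: le_bigmin2 => t /lam_bounds_T[lam_ge0 _]; exact: ler_wpM2l.
Qed.

Lemma lam_mul_box e y : e \in T -> -1 <= y <= 1 -> -1 <= lam G e * y <= 1.
Proof. by move=> /lam_bounds_T[? ?] /andP[? ?]; apply/andP; split; nra. Qed.

Lemma bellman_box x : in_box (-1) 1 x -> in_box (-1) 1 (bellman x).
Proof.
move=> box_x v.
have term_box t : (v, t) \in T -> -1 <= lam G (v, t) * x t <= 1.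
  by move=> vt; exact: lam_mul_box vt (box_x t).
rewrite /bellman; case: (isMax G v); apply/andP; split.
- exact: bigmax_ge_id.
- by apply: bigmax_le => [|t /term_box /andP[]//]; lra.
- by apply: le_bigmin => [|t /term_box /andP[]//]; lra.
- exact: bigmin_le_id.
Qed.

Definition descent_direction (d : V -> R) : Prop :=
  [/\ in_box (-1) 1 d,
      {in T, forall e, 0 <= slope d e},
      forall v t, (v, t) \in T -> exists2 t', (v, t') \in T & slope d (v, t') = 0
    & forall u, (forall t, (u, t) \notin T) ->
        forall t, (u, t) \in E G -> slope d (u, t) < 0].

Lemma descent_direction_exists : exists d, descent_direction d.
Proof.
have [|d box_d fix_d] := monotone_box_fixpoint (a := -1) (b := 1) _
  bellman_mono bellman_box; first by lra.
have fix_v v : d v = bellman d v by rewrite fix_d.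
exists d; split => //.
- move=> [v t] vt; rewrite /slope /= [d v]fix_v /bellman.
  case: (isMax G v); rewrite subr_ge0.
  + exact: le_bigmax_cond.
  + exact: bigmin_le_cond.
- move=> v t vt; rewrite /slope /= [d v]fix_v /bellman.
  pose F t' := lam G (v, t') * d t'.
  have F_ge t' (vt' : (v, t') \in T) : -1 <= F t'.
    by case/andP: (lam_mul_box vt' (box_d t')).
  have F_le t' (vt' : (v, t') \in T) : F t' <= 1.
    by case/andP: (lam_mul_box vt' (box_d t')).
  case: (isMax G v).
  + have [t' vt' ->] := eq_bigmax t _ F vt F_ge.
    by exists t' => //; rewrite subrr.
  + have [t' vt' ->] := eq_bigmin t _ F vt F_le.
    by exists t' => //; rewrite subrr.
- move=> u no_T t ut_E; have [lam_ge0 lam_lt1] := lam_bounds ut_E.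
  have /andP[? ?] := box_d t.
  have no_T' : (fun t => (u, t) \in T) =1 xpred0 by move=> t'; exact/negbTE.
  rewrite /slope /= [d u]fix_v /bellman.
  by case: (isMax G u); rewrite big_pred0 //; nra.
Qed.

Section Switch.
Variables (E' : {set V * V}) (d : V -> R).
Hypotheses (T_sub_E' : T \subset E') (E'_sub : E' \subset E G).
Hypothesis E'_out : forall v, exists t, (v, t) \in E'.
Hypothesis d_descent : descent_direction d.

(* By [E'_out], the default [v] of [odflt] is never returned. *)
Definition switch (v : V) : V :=
  if [pick t | ((v, t) \in T) && (slope d (v, t) == 0)] is Some t then t
  else odflt v [pick t | (v, t) \in E'].

Lemma switch_in_E' v : (v, switch v) \in E'.
Proof.
rewrite /switch; case: pickP => [t /andP[vt _]|_]; first exact: (subsetP T_sub_E').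
case: pickP => [t //|none]; have [t vt] := E'_out v.
by have := none t; rewrite vt.
Qed.

Lemma switch_slope_lt0 u :
  (forall t, (u, t) \notin T) -> slope d (u, switch u) < 0.
Proof.
case: d_descent => _ _ _ loose_lt0 no_T.
by apply: loose_lt0 => //; apply: (subsetP E'_sub); exact: switch_in_E'.
Qed.

Lemma switch_slope_le0 v : slope d (v, switch v) <= 0.
Proof.
have [[t vt]|no_T] := pselect (exists t, (v, t) \in T); last first.
  by apply/ltW/switch_slope_lt0 => t; apply/negP => vt; apply: no_T; exists t.
case: d_descent => _ _ flat _; have [t' vt' flat'] := flat v t vt.
rewrite /switch; case: pickP => [t'' /andP[_ /eqP ->] // | no_flat].
by have := no_flat t'; rewrite vt' flat' eqxx.
Qed.

Lemma sum_switch_slope_lt0 :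
  (exists u, forall t, (u, t) \notin T) -> \sum_v slope d (v, switch v) < 0.
Proof.
move=> [u no_T]; rewrite (bigD1 u) //=.
have := switch_slope_lt0 no_T.
have : \sum_(v | v != u) slope d (v, switch v) <= 0.
  by apply: sumr_le0 => v _; exact: switch_slope_le0.
lra.
Qed.

End Switch.
End Bellman.
End Game.

Theorem theorem4p4 (R : realType) (V : finType) (G : game R V)
  (s : V -> V) (nu : V -> R) (E' : {set V * V}) :
  valid_game G -> improving G ->
  joint_strategy G s ->
  basis_val G nu -> minimises G s nu -> f_strat G s nu != 0 ->
  (forall e, e \in E G -> offset G nu e >= offset G nu (e.1, s e.1)) ->
  E_tight G nu \subset E' -> E' \subset S_set G s nu ->
  (forall v : V, exists v' : V, (v, v') \in E') ->
  exists (nu'' : V -> R) (s' : V -> V),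
    [/\ neighbouring G nu nu'', joint_strategy G s',
        f_strat G s' nu'' < f_strat G s nu, better G s' s &
        forall v, (v, s' v) \in E'].
Proof.
move=> [_ lam_bounds] improve js nu_basis nu_min f_neq0 no_local tight_E' E'_S E'_out.
have nu_sol := nu_min.1.
have E'_sub : E' \subset E G.
  by apply/subsetP => e /(subsetP E'_S); rewrite inE => /andP[].
have tight_sub : E_tight G nu \subset E G by exact: subset_trans tight_E' E'_sub.
have [d d_descent] := descent_direction_exists lam_bounds tight_sub.
pose s' := switch G (E_tight G nu) E' d.
have s'_E' : forall v, (v, s' v) \in E' := switch_in_E' G d tight_E' E'_out.
have js' : joint_strategy G s' by move=> v; exact: (subsetP E'_sub).
have f_s'_nu : f_strat G s' nu = f_strat G s nu.
  apply: eq_bigr => v _.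
  by have := subsetP E'_S _ (s'_E' v); rewrite inE => /andP[_ /eqP].
have [box_d tight_slope _ _] := d_descent.
have not_min : ~ minimises G s' nu.
  apply: (descent_not_minimises lam_bounds nu_sol box_d tight_slope).
  apply: sum_switch_slope_lt0 => //.
  exact: loose_vertex_exists nu_sol js no_local f_neq0.
have [nu'' [nu''_nb lt_nu'']] := improve.2 s' nu js' nu_basis not_min.
rewrite f_s'_nu in lt_nu''.
have [B [e [e' [_ _ _ _ nu''_val]]]] := nu''_nb.
have nu''_basis : basis_val G nu'' by exists (e' |: B :\ e).
have [mu mu_min] := improving_minimiser_exists improve js' nu''_basis.
exists nu'', s'; split => //.
exists (f_strat G s' mu), (f_strat G s nu); split; [|split].
- exact: minimises_is_min_value.
- exact: minimises_is_min_value.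
- exact: le_lt_trans (mu_min.2 _ nu''_val.2.2) lt_nu''.
Qed.
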